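(* If $(X,d)$ is a finite metric space of cardinality $n$, then there exists $\alpha\in(0,1)$ such that $(X,d^\alpha)$ admits an isometric embedding into the Euclidean space $\mathbb R^n$.
   Context: For a metric space $(X,d)$ and $\alpha\in(0,1)$, $d^\alpha$ denotes the metric $(x,y)\mapsto d(x,y)^\alpha$. *)

From Stdlib Require Import Reals List.
Import ListNotations.
Open Scope R_scope.

Definition is_metric {X : Type} (d : X -> X -> R) : Prop :=
  (forall x y, 0 <= d x y) /\
  (forall x y, d x y = 0 <-> x = y) /\
  (forall x y, d x y = d y x) /\
  (forall x y z, d x z <= d x y + d y z).

Definition has_card (X : Type) (n : nat) : Prop :=
  exists l : list X, NoDup l /\ (forall x, In x l) /\ length l = n.

(* Real power t^a for t >= 0, with the convention 0^a = 0 (a > 0). *)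
Definition rpow (t a : R) : R := if Rle_dec t 0 then 0 else Rpower t a.

(* Points of R^n are represented by functions nat -> R, only coordinates
   0..n-1 being relevant. Euclidean distance in R^n: *)
Definition euclid_dist (n : nat) (u v : nat -> R) : R :=
  sqrt (fold_right Rplus 0 (map (fun i => (u i - v i) ^ 2) (seq 0 n))).

From Stdlib Require Import Reals List Lra Lia IndefiniteDescription.
Open Scope R_scope.

(* For small alpha every nonzero distance d^alpha is close to 1, so the matrix
   G_ij = (1 - d_ij^(2 alpha)) / 2 (with G_ii = 1/2) is a small perturbation of
   the identity over 2.  A Cholesky factorisation with inductively controlled
   entries writes G = V V^T, and the rows of V are the required points because
   |V_i - V_j|^2 = G_ii + G_jj - 2 G_ij = d_ij^(2 alpha). *)

Fixpoint rsum (f : nat -> R) (m : nat) : R :=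
  match m with O => 0 | S p => rsum f p + f p end.

Lemma rsum_ext f h m :
  (forall k, (k < m)%nat -> f k = h k) -> rsum f m = rsum h m.
Proof.
  induction m as [|m IH]; cbn [rsum]; intros H; [reflexivity|].
  rewrite IH by (intros; apply H; lia). rewrite (H m) by lia. reflexivity.
Qed.

Lemma rsum_eq0 f m : (forall k, (k < m)%nat -> f k = 0) -> rsum f m = 0.
Proof.
  intros H. rewrite (rsum_ext f (fun _ => 0)) by exact H. clear H.
  induction m as [|m IH]; cbn [rsum]; [reflexivity|]. rewrite IH. ring.
Qed.

Lemma rsum_plus f h m : rsum (fun k => f k + h k) m = rsum f m + rsum h m.
Proof. induction m as [|m IH]; cbn [rsum]; [ring | rewrite IH; ring]. Qed.

Lemma rsum_scal c f m : rsum (fun k => c * f k) m = c * rsum f m.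
Proof. induction m as [|m IH]; cbn [rsum]; [ring | rewrite IH; ring]. Qed.

Lemma rsum_single f p m : (p < m)%nat ->
  (forall k, (k < m)%nat -> k <> p -> f k = 0) -> rsum f m = f p.
Proof.
  induction m as [|m IH]; intros Hp Hf; [lia|]. cbn [rsum].
  destruct (Nat.eq_dec m p) as [<-|Hmp].
  - rewrite rsum_eq0 by (intros k Hk; apply Hf; lia). ring.
  - rewrite IH, (Hf m) by (lia || intros; apply Hf; lia). ring.
Qed.

Lemma Rabs_rsum_le f B m : (forall k, (k < m)%nat -> Rabs (f k) <= B) ->
  Rabs (rsum f m) <= INR m * B.
Proof.
  induction m as [|m IH]; cbn [rsum]; intros H.
  - rewrite Rabs_R0; simpl; lra.
  - rewrite S_INR. eapply Rle_trans; [apply Rabs_triang|].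
    specialize (IH (fun k Hk => H k ltac:(lia))). specialize (H m ltac:(lia)). lra.
Qed.

Lemma fold_right_Rplus_init a l :
  fold_right Rplus a l = fold_right Rplus 0 l + a.
Proof. induction l as [|x l IH]; simpl; [ring | rewrite IH; ring]. Qed.

Lemma fold_right_Rplus_seq h m : fold_right Rplus 0 (map h (seq 0 m)) = rsum h m.
Proof.
  induction m as [|m IH]; [reflexivity|].
  rewrite seq_S, map_app, fold_right_app, fold_right_Rplus_init, IH.
  simpl. ring.
Qed.

Lemma euclid_dist_of_gram n (u v : nat -> R) c :
  rsum (fun k => u k * u k) n = 1/2 -> rsum (fun k => v k * v k) n = 1/2 ->
  rsum (fun k => u k * v k) n = (1 - c ^ 2) / 2 -> 0 <= c ->
  euclid_dist n u v = c.
Proof.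
  intros Hu Hv Huv Hc. unfold euclid_dist. rewrite fold_right_Rplus_seq.
  rewrite (rsum_ext _ (fun k => (u k * u k + v k * v k) + (-2) * (u k * v k)))
    by (intros; ring).
  rewrite rsum_plus, rsum_plus, rsum_scal, Hu, Hv, Huv.
  replace (1/2 + 1/2 + -2 * ((1 - c ^ 2) / 2)) with (c ^ 2) by field.
  apply sqrt_pow2, Hc.
Qed.

Definition small_lower_triangular (eps : R) (m : nat) (V : nat -> nat -> R) : Prop :=
  (forall i k, (i < m)%nat -> (i < k)%nat -> V i k = 0) /\
  (forall i, (i < m)%nat -> 1/2 <= V i i) /\
  (forall i k, (i < m)%nat -> (k < i)%nat -> Rabs (V i k) <= 4 * eps).

Section ForwardSubstitution.

Variables (eps : R) (m : nat) (V : nat -> nat -> R) (b : nat -> R).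
Hypotheses (Heps : 0 <= eps) (Hsmall : 16 * INR m * eps <= 1)
  (HV : small_lower_triangular eps m V)
  (Hb : forall j, (j < m)%nat -> Rabs (b j) <= eps).

Lemma forward_substitution_prefix p : (p <= m)%nat -> exists r : nat -> R,
  (forall k, (p <= k)%nat -> r k = 0) /\ (forall k, Rabs (r k) <= 4 * eps) /\
  (forall j, (j < p)%nat -> rsum (fun k => r k * V j k) m = b j).
Proof.
  destruct HV as [Hup [Hdiag Hlow]].
  induction p as [|p IH]; intros Hp.
  { exists (fun _ => 0). split; [|split]; intros; [reflexivity | rewrite Rabs_R0; lra | lia]. }
  destruct IH as [r [Hr0 [Hrb Hrs]]]; [lia|].
  set (S := rsum (fun k => r k * V p k) m).
  assert (HS : Rabs S <= INR m * (4 * eps * (4 * eps))).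
  { apply Rabs_rsum_le. intros k Hk. destruct (Compare_dec.lt_dec k p).
    - rewrite Rabs_mult. apply Rmult_le_compat; try apply Rabs_pos; auto.
    - rewrite (Hr0 k), Rmult_0_l, Rabs_R0 by lia. nra. }
  assert (Hvp : 1/2 <= V p p) by (apply Hdiag; lia).
  set (val := (b p - S) / V p p).
  assert (Hval : val * V p p = b p - S) by (unfold val; field; lra).
  assert (Hvb : Rabs val <= 4 * eps).
  { assert (Rabs val * V p p <= eps + eps * (16 * INR m * eps)).
    { rewrite <- (Rabs_pos_eq (V p p)), <- Rabs_mult, Hval by lra.
      unfold Rminus. eapply Rle_trans; [apply Rabs_triang|].
      rewrite Rabs_Ropp. specialize (Hb p ltac:(lia)). nra. }
    pose proof (Rabs_pos val). nra. }
  exists (fun k => r k + if Nat.eq_dec k p then val else 0).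
  split; [|split].
  - intros k Hk. destruct (Nat.eq_dec k p); [lia|]. rewrite Hr0 by lia. ring.
  - intros k. destruct (Nat.eq_dec k p) as [->|]; [rewrite Hr0 by lia|];
      rewrite ?Rplus_0_l, ?Rplus_0_r; auto.
  - intros j Hj.
    rewrite (rsum_ext _ (fun k => r k * V j k + (if Nat.eq_dec k p then val else 0) * V j k))
      by (intros; ring).
    rewrite rsum_plus, (rsum_single (fun k => (if Nat.eq_dec k p then val else 0) * V j k) p)
      by (lia || (intros k _ Hk; destruct (Nat.eq_dec k p); [contradiction | ring])).
    destruct (Nat.eq_dec p p) as [_|]; [|contradiction].
    destruct (Nat.eq_dec j p) as [->|Hjp].
    + fold S. rewrite Hval. ring.
    + rewrite Hrs, (Hup j p) by lia. ring.
Qed.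

Lemma forward_substitution : exists r : nat -> R,
  (forall k, (m <= k)%nat -> r k = 0) /\ (forall k, Rabs (r k) <= 4 * eps) /\
  (forall j, (j < m)%nat -> rsum (fun k => r k * V j k) m = b j).
Proof. exact (forward_substitution_prefix m (Nat.le_refl m)). Qed.

End ForwardSubstitution.

Definition near_half_identity (eps : R) (m : nat) (g : nat -> nat -> R) : Prop :=
  (forall i j, (i < m)%nat -> (j < m)%nat -> g i j = g j i) /\
  (forall i, (i < m)%nat -> g i i = 1/2) /\
  (forall i j, (i < m)%nat -> (j < m)%nat -> i <> j -> Rabs (g i j) <= eps).

Definition gram_factor (m : nat) (g V : nat -> nat -> R) : Prop :=
  forall i j, (i < m)%nat -> (j < m)%nat -> rsum (fun k => V i k * V j k) m = g i j.

Lemma cholesky_step eps g m V :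
  0 <= eps -> 16 * INR (S m) * eps <= 1 -> near_half_identity eps (S m) g ->
  small_lower_triangular eps m V -> gram_factor m g V ->
  exists V', small_lower_triangular eps (S m) V' /\ gram_factor (S m) g V'.
Proof.
  intros Heps Hsmall [Hsym [Hdiag Hoff]] HV Hgram.
  rewrite S_INR in Hsmall. pose proof (pos_INR m).
  destruct (forward_substitution eps m V (g m)) as [r [Hr0 [Hrb Hrs]]]; auto.
  { nra. }
  { intros j Hj. apply Hoff; lia. }
  destruct HV as [Hup [Hvdiag Hlow]].
  set (q := 1/2 - rsum (fun k => r k * r k) m).
  assert (Hq : 1/4 <= q).
  { assert (HS : Rabs (rsum (fun k => r k * r k) m) <= INR m * (4 * eps * (4 * eps))).
    { apply Rabs_rsum_le. intros k _. rewrite Rabs_mult.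
      apply Rmult_le_compat; try apply Rabs_pos; auto. }
    unfold q, Rabs in *; destruct Rcase_abs; nra. }
  assert (Hsq : sqrt q * sqrt q = q) by (apply sqrt_sqrt; lra).
  pose proof (sqrt_pos q).
  exists (fun i k => if Nat.eq_dec i m then (if Nat.eq_dec k m then sqrt q else r k)
                     else V i k).
  split; [split; [|split]|].
  - intros i k Hi Hk. destruct (Nat.eq_dec i m); [|apply Hup; lia].
    destruct (Nat.eq_dec k m); [lia|]. apply Hr0; lia.
  - intros i Hi. destruct (Nat.eq_dec i m); [|apply Hvdiag; lia].
    destruct (Nat.eq_dec i m); [nra|lia].
  - intros i k Hi Hk. destruct (Nat.eq_dec i m); [|apply Hlow; lia].
    destruct (Nat.eq_dec k m); [lia|auto].
  - intros i j Hi Hj. cbn [rsum].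
    destruct (Nat.eq_dec i m) as [->|Him]; destruct (Nat.eq_dec j m) as [->|Hjm];
      destruct (Nat.eq_dec m m) as [_|]; try contradiction.
    + rewrite (rsum_ext _ (fun k => r k * r k)), Hsq, Hdiag by
        (lia || (intros k Hk; destruct (Nat.eq_dec k m); [lia | reflexivity])).
      unfold q. ring.
    + rewrite (rsum_ext _ (fun k => r k * V j k)), Hrs, (Hup j m) by
        (lia || (intros k Hk; destruct (Nat.eq_dec k m); [lia | reflexivity])).
      ring.
    + rewrite (rsum_ext _ (fun k => r k * V i k)), Hrs, (Hup i m), Hsym by
        (lia || (intros k Hk; destruct (Nat.eq_dec k m); [lia | ring])).
      ring.
    + rewrite Hgram, (Hup i m) by lia. ring.
Qed.

Lemma near_half_identity_cholesky eps g m :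
  0 <= eps -> 16 * INR m * eps <= 1 -> near_half_identity eps m g ->
  exists V, small_lower_triangular eps m V /\ gram_factor m g V.
Proof.
  intros Heps. induction m as [|m IH]; intros Hsmall Hg.
  - exists (fun _ _ => 0). repeat split; intros i; lia.
  - destruct IH as [V [HV Hgram]].
    + rewrite S_INR in Hsmall. nra.
    + destruct Hg as [Hsym [Hdiag Hoff]].
      repeat split; intros; [apply Hsym | apply Hdiag | apply Hoff]; auto; lia.
    + exact (cholesky_step eps g m V Heps Hsmall Hg HV Hgram).
Qed.

Lemma half_gram_near_half_identity eps m (D : nat -> nat -> R) :
  (forall i j, D i j = D j i) -> (forall i, D i i = 0) ->
  (forall i j, (i < m)%nat -> (j < m)%nat -> i <> j -> Rabs (1 - D i j ^ 2) <= 2 * eps) ->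
  near_half_identity eps m (fun i j => (1 - D i j ^ 2) / 2).
Proof.
  intros Hsym Hdiag Hnear. split; [|split].
  - intros i j _ _. rewrite Hsym. reflexivity.
  - intros i _. rewrite Hdiag. field.
  - intros i j Hi Hj Hij. unfold Rdiv.
    rewrite Rabs_mult, (Rabs_pos_eq (/ 2)) by lra.
    specialize (Hnear i j Hi Hj Hij). lra.
Qed.

Lemma gram_rows_dist n (D V : nat -> nat -> R) :
  (forall i, D i i = 0) -> (forall i j, 0 <= D i j) ->
  gram_factor n (fun i j => (1 - D i j ^ 2) / 2) V ->
  forall i j, (i < n)%nat -> (j < n)%nat -> euclid_dist n (V i) (V j) = D i j.
Proof.
  intros Hdiag Hpos HV i j Hi Hj.
  apply euclid_dist_of_gram; [rewrite HV, Hdiag by auto; field .. | apply HV; auto | auto].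
Qed.

Lemma Rabs_exp_sub_1_le x : Rabs x <= 1/2 -> Rabs (exp x - 1) <= 2 * Rabs x.
Proof.
  intros Hx.
  pose proof (exp_ineq1_le x) as Hlow.
  (* The upper bound comes from exp (- x) >= 1 - x, i.e. exp x <= 1 / (1 - x). *)
  pose proof (exp_ineq1_le (- x)) as Hup. rewrite exp_Ropp in Hup.
  pose proof (exp_pos x).
  assert (Hup' : exp x * (1 - x) <= 1).
  { apply (Rmult_le_compat_l (exp x)) in Hup; [|lra].
    rewrite Rinv_r in Hup by lra. lra. }
  unfold Rabs in *; repeat destruct Rcase_abs; nra.
Qed.

Lemma bounded_on_list (f : R -> R) (s : list R) :
  exists B, 0 <= B /\ forall t, In t s -> Rabs (f t) <= B.
Proof.
  induction s as [|a s [B [HB H]]].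
  - exists 0; split; [lra | intros t []].
  - exists (Rmax (Rabs (f a)) B). split.
    + eapply Rle_trans; [exact HB | apply Rmax_r].
    + intros t [<-|Ht]; [apply Rmax_l|].
      eapply Rle_trans; [apply H; auto | apply Rmax_r].
Qed.

Lemma rpow_nonneg t a : 0 <= rpow t a.
Proof. unfold rpow; destruct Rle_dec; [lra | left; apply exp_pos]. Qed.

Lemma rpow_sq_near_1 (s : list R) eps : 0 < eps ->
  exists a, 0 < a < 1 /\
    forall t, In t s -> 0 < t -> Rabs (1 - rpow t a ^ 2) <= eps.
Proof.
  intros Heps. destruct (bounded_on_list ln s) as [B [HB Hln]].
  set (a := eps / (4 * (B + 1) * (eps + 1))).
  assert (Ha : 0 < a) by (unfold a; apply Rdiv_lt_0_compat; nra).
  assert (Ha_eps : 4 * (B + 1) * (eps + 1) * a = eps) by (unfold a; field; lra).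
  assert (Ha1 : 4 * (eps + 1) * a <= eps) by nra.
  exists a. split; [nra|]. intros t Ht Ht0.
  unfold rpow, Rpower. destruct Rle_dec; [lra|].
  replace ((exp (a * ln t)) ^ 2) with (exp (2 * a * ln t))
    by (simpl; rewrite Rmult_1_r, <- exp_plus; f_equal; ring).
  specialize (Hln t Ht).
  assert (Hx : Rabs (2 * a * ln t) <= 2 * a * B)
    by (rewrite Rabs_mult, (Rabs_pos_eq (2 * a)) by lra; nra).
  rewrite Rabs_minus_sym.
  eapply Rle_trans; [apply Rabs_exp_sub_1_le; nra | nra].
Qed.

Theorem proposition2p2 (X : Type) (d : X -> X -> R) (n : nat) :
  is_metric d -> has_card X n ->
  exists alpha : R, 0 < alpha < 1 /\
    exists f : X -> (nat -> R),
      forall x y : X, euclid_dist n (f x) (f y) = rpow (d x y) alpha.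
Proof.
  intros [Hpos [Hzero [Hsym _]]] [[|x0 l] [Hnd [Hin Hlen]]].
  { exists (1/2). split; [lra|]. exists (fun _ _ => 0). intros x; destruct (Hin x). }
  set (L := x0 :: l) in *.
  set (p := fun i => nth i L x0).
  set (eps := / (16 * (INR n + 1))).
  pose proof (pos_INR n).
  assert (Heps : 0 < eps) by (apply Rinv_0_lt_compat; lra).
  assert (Hsmall : 16 * INR n * eps <= 1)
    by (unfold eps; apply (Rmult_le_reg_r (16 * (INR n + 1))); [lra | field_simplify; lra]).
  destruct (rpow_sq_near_1 (map (fun xy => d (fst xy) (snd xy)) (list_prod L L)) (2 * eps))
    as [a [Ha Hnear]]; [lra|].
  set (D := fun i j => rpow (d (p i) (p j)) a).
  assert (HD0 : forall i, D i i = 0).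
  { intros i. unfold D, rpow. rewrite (proj2 (Hzero _ _) eq_refl). destruct Rle_dec; lra. }
  destruct (near_half_identity_cholesky eps (fun i j => (1 - D i j ^ 2) / 2) n)
    as [V [_ HV]]; [lra | exact Hsmall | |].
  { apply half_gram_near_half_identity; [intros; unfold D; rewrite Hsym; reflexivity | exact HD0 |].
    intros i j Hi Hj Hij. apply Hnear.
    - apply (in_map (fun xy => d (fst xy) (snd xy)) _ (p i, p j)), in_prod; apply nth_In; lia.
    - destruct (Hpos (p i) (p j)) as [|E]; [assumption|]. contradiction Hij.
      apply (proj1 (NoDup_nth L x0) Hnd); try lia. apply Hzero. auto. }
  assert (Hidx : forall x, {i | (i < n)%nat /\ p i = x}).
  { intros x. apply constructive_indefinite_description.
    destruct (In_nth L x x0 (Hin x)) as [i [Hi E]]. exists i. split; [lia | exact E]. }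
  exists a. split; [exact Ha|]. exists (fun x => V (proj1_sig (Hidx x))). intros x y.
  destruct (Hidx x) as [i [Hi <-]], (Hidx y) as [j [Hj <-]].
  apply (gram_rows_dist n D V); auto. intros; apply rpow_nonneg.
Qed.
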